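(* Let $(K,d_K)$ be an acyclic graded-commutative dg-ring and let $(A,d_A)$ be a dg-Azumaya algebra of the second kind over $(K,d_K)$. Then $(A,d_A)$ is a dg-Azumaya algebra of the first kind, i.e. $\ker(d_A)$ is graded-Azumaya over $\ker(d_K)$; in particular $\ker(d_A)\otimes_{\ker(d_K)}\ker(d_A)^{op}\cong\mathrm{End}_{\ker(d_K),graded}(\ker(d_A))$.
   Context: Dg-algebra: $\mathbb Z$-graded algebra with degree-$1$ map $d$, $d^2=0$, $d(ab)=d(a)b+(-1)^{|a|}a\,d(b)$. Acyclic: $H(K,d_K)=0$. Graded-commutative: $xy=(-1)^{|x||y|}yx$. Graded centre $Z_{gr}(A)$: spanned by homogeneous $z$ with $za=(-1)^{|z||a|}az$. Dg-algebra over $(K,d_K)$: dg-algebra with a degree-$0$ graded ring homomorphism $K\to Z_{gr}(A)$ commuting with differentials. $A^{op}$: product $b\cdot_{op}a=(-1)^{|a||b|}ab$. For graded-commutative $R$, a graded $R$-algebra $A$ is graded-Azumaya if it is a faithfully projective graded $R$-module, $Z_{gr}(A)=R$, and $A\otimes_RA^{op}\to\mathrm{End}_{R,graded}(A)$, $a\otimes b\mapsto(x\mapsto(-1)^{|b||x|}axb)$, is an isomorphism. $(A,d_A)$ is dg-Azumaya of the second kind if $A$ is graded-Azumaya over $K$; of the first kind if $\ker(d_A)$ is graded-Azumaya over $\ker(d_K)$. *)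

(* Z-graded rings are represented internally: a ring A together
   with homogeneous-component projections pi : int -> A -> A. Sub-(graded) rings
   such as ker(d) are represented by boolean predicates on the ambient ring. *)
From HB Require Import structures.
From mathcomp Require Import all_boot all_order all_algebra.
From Stdlib Require Import ClassicalEpsilon.
Set Implicit Arguments. Unset Strict Implicit. Unset Printing Implicit Defensive.
Import Order.TTheory GRing.Theory Num.Theory.
Local Open Scope ring_scope.

Definition ksign (R : pzRingType) (n m : int) : R :=
  (-1) ^+ (odd (absz n) && odd (absz m)).

Definition homog (A : pzRingType) (pi : int -> A -> A) (n : int) (x : A) : Prop :=
  pi n x = x.

Definition is_grading (A : pzRingType) (pi : int -> A -> A) : Prop :=
  [/\ forall n x y, pi n (x + y) = pi n x + pi n y,
      forall m n x, pi m (pi n x) = (if m == n then pi n x else 0),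
      forall x, exists s : seq int, uniq s /\ x = \sum_(k <- s) pi k x,
      homog pi 0 1 &
      forall m n x y, homog pi m x -> homog pi n y -> homog pi (m + n) (x * y)].

Definition gsupp (A : pzRingType) (pi : int -> A -> A) (x : A) : seq int :=
  epsilon (inhabits [::])
    (fun s : seq int => uniq s /\ x = \sum_(k <- s) pi k x).

Definition dg_ring (A : pzRingType) (pi : int -> A -> A) (d : A -> A) : Prop :=
  [/\ forall x y, d (x + y) = d x + d y,
      forall x, d (d x) = 0,
      forall n x, homog pi n x -> homog pi (n + 1) (d x) &
      forall n a b, homog pi n a ->
        d (a * b) = d a * b + (-1) ^+ (odd (absz n)) * (a * d b)].

Definition acyclic (A : pzRingType) (d : A -> A) : Prop :=
  forall x, d x = 0 -> exists y, d y = x.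

Definition graded_commutative (A : pzRingType) (pi : int -> A -> A) : Prop :=
  forall m n x y, homog pi m x -> homog pi n y -> x * y = ksign A m n * (y * x).

Definition grcentral (A : pzRingType) (pi : int -> A -> A) (SA : pred A) (z : A) : Prop :=
  forall n m a, SA a -> homog pi m a -> pi n z * a = ksign A n m * (a * pi n z).

Definition kerd (A : pzRingType) (d : A -> A) : pred A := fun x => d x == 0.

Definition dg_algebra_over (K A : pzRingType) (piK : int -> K -> K) (piA : int -> A -> A)
  (dK : K -> K) (dA : A -> A) (iota : {rmorphism K -> A}) : Prop :=
  [/\ forall n r, homog piK n r -> homog piA n (iota r),
      forall r, dA (iota r) = iota (dK r) &
      forall r, grcentral piA predT (iota r)].

Section GradedAzumaya.
Variables (K A : pzRingType) (piK : int -> K -> K) (piA : int -> A -> A)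
  (SK : pred K) (SA : pred A) (iota : {rmorphism K -> A}).

(* SA is a faithfully projective graded SK-module (action r.x = iota r * x):
   f.g. projective via a graded dual basis (direct summand of a graded free module
   (+)_i SK(-n_i)), and faithful. *)
Definition gr_fg_projective : Prop :=
  exists (k : nat) (e : 'I_k -> A) (dg : 'I_k -> int) (f : 'I_k -> A -> K),
  [/\ forall i, SA (e i) /\ homog piA (dg i) (e i),
      forall i x, SA x -> SK (f i x),
      (forall i x y, SA x -> SA y -> f i (x + y) = f i x + f i y) /\
      (forall i r x, SK r -> SA x -> f i (iota r * x) = r * f i x),
      forall i m x, SA x -> homog piA m x -> homog piK (m - dg i) (f i x) &
      forall x, SA x -> x = \sum_(i < k) iota (f i x) * e i].

Definition gr_faithful : Prop :=
  forall r, SK r -> (forall x, SA x -> iota r * x = 0) -> r = 0.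

Definition glin (n : int) (f : A -> A) : Prop :=
  [/\ forall x, ~~ SA x -> f x = 0,
      forall x, SA x -> SA (f x),
      forall x y, SA x -> SA y -> f (x + y) = f x + f y,
      forall k x, SA x -> homog piA k x -> homog piA (k + n) (f x) &
      forall p r x, SK r -> homog piK p r -> SA x ->
        f (iota r * x) = ksign A n p * (iota r * f x)].

Definition gend (f : A -> A) : Prop :=
  exists (k : nat) (dg : 'I_k -> int) (fs : 'I_k -> A -> A),
    (forall i, glin (dg i) (fs i)) /\ forall x, f x = \sum_(i < k) fs i x.

Definition twist (n : int) (x : A) : A :=
  \sum_(k <- gsupp piA x) ksign A n k * piA k x.

(* the image of a (x) b : x |-> (-1)^{|b||x|} a x b, extended biadditively *)
Definition azphi (a b : A) : A -> A :=
  fun x => if SA x then \sum_(n <- gsupp piA b) a * twist n x * piA n b else 0.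

(* The map SA (x)_SK SA^op -> End_gr(SA), a(x)b |-> azphi a b, is well defined
   (SK-balanced, biadditive, valued in End_gr) and an isomorphism; the tensor
   product is given by its universal property. *)
Definition tensor_end_iso : Prop :=
  [/\ forall a b, SA a -> SA b -> gend (azphi a b),
      (forall a a' b, SA a -> SA a' -> SA b -> azphi (a + a') b = (fun x => azphi a b x + azphi a' b x)) /\
      (forall a b b', SA a -> SA b -> SA b' -> azphi a (b + b') = (fun x => azphi a b x + azphi a b' x)),
      forall a r b, SA a -> SK r -> SA b -> azphi (a * iota r) b = azphi a (iota r * b) &
      forall (G : zmodType) (beta : A -> A -> G),
        (forall a a' b, SA a -> SA a' -> SA b -> beta (a + a') b = beta a b + beta a' b) ->
        (forall a b b', SA a -> SA b -> SA b' -> beta a (b + b') = beta a b + beta a b') ->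
        (forall a r b, SA a -> SK r -> SA b -> beta (a * iota r) b = beta a (iota r * b)) ->
        exists h : (A -> A) -> G,
          [/\ forall f g, gend f -> gend g -> h (fun x => f x + g x) = h f + h g,
              forall a b, SA a -> SA b -> h (azphi a b) = beta a b &
              forall h' : (A -> A) -> G,
                (forall f g, gend f -> gend g -> h' (fun x => f x + g x) = h' f + h' g) ->
                (forall a b, SA a -> SA b -> h' (azphi a b) = beta a b) ->
                forall f, gend f -> h' f = h f]].

Definition graded_azumaya : Prop :=
  [/\ gr_fg_projective /\ gr_faithful,
      (* Z_gr(SA) = SK via iota *)
      forall r, SK r -> SA (iota r) /\ grcentral piA SA (iota r),
      forall r, SK r -> iota r = 0 -> r = 0,
      forall z, SA z -> grcentral piA SA z -> exists2 r, SK r & iota r = z &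
      tensor_end_iso].

End GradedAzumaya.

From HB Require Import structures.
From mathcomp Require Import all_boot all_algebra ring.
From Stdlib Require Import ClassicalEpsilon FunctionalExtensionality.
Set Implicit Arguments. Unset Strict Implicit. Unset Printing Implicit Defensive.
Import GRing.Theory.
Local Open Scope ring_scope.

(* Since [K] is acyclic, the degree -1 part [y] of a preimage of 1 satisfies [d y = 1]; its
   image [u] in [A] is graded-central with [d u = 1]. Hence every [x] splits uniquely as
   [x = zpart x + u * d x] with [zpart x] a cycle, i.e. [A = ker dA (+) u ker dA] (and
   likewise for [K] and [y]), and [zpart] is multiplicative up to a correction
   [zcorr a * d b] with [zcorr a = u * u * twist 1 (d a)]. Every ingredient of the Azumaya
   property then descends to cycles: a graded dual basis [(e_i, f_i)] of [A] over [K] gives the dual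
   basis [(zpart e_i, d e_i)] with coordinates [(zpart f_i, zcorr f_i)]; a central cycle of
   [ker dA] is central in [A]; and endomorphisms of [ker dA] extend to [A] and restrict back,
   which transports the universal property of [A (x)_K A^op = End(A)] to the cycles. *)

Lemma odd_absz_subn (a b : nat) : odd `|a%:Z - b%:Z| = odd a (+) odd b.
Proof.
case: (leqP b a) => h; first by rewrite subzn // absz_nat oddB.
by rewrite -opprB (subzn (ltnW h)) abszN absz_nat (oddB (ltnW h)) addbC.
Qed.

Lemma odd_abszD (m n : int) : odd `|m + n| = odd `|m| (+) odd `|n|.
Proof.
case: m => a; case: n => b.
- by rewrite -PoszD absz_nat oddD.
- by rewrite NegzE odd_absz_subn.
- by rewrite NegzE addrC odd_absz_subn addbC.
- by rewrite !NegzE -opprD !abszN -PoszD !absz_nat oddD.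
Qed.

Section KoszulSign.
Context {R : pzRingType}.
Local Notation ks := (ksign R).

Lemma ksignC n m : ks n m = ks m n.
Proof. by rewrite /ksign andbC. Qed.

Lemma ksignDl n p m : ks (n + p) m = ks n m * ks p m.
Proof.
rewrite /ksign odd_abszD -signr_addb; congr (_ ^+ _).
by case: (odd `|n|); case: (odd `|p|); case: (odd `|m|).
Qed.

Lemma ksignDr n m p : ks n (m + p) = ks n m * ks n p.
Proof. by rewrite ksignC ksignDl !(ksignC n). Qed.

Lemma ksignN1l m : ks (-1) m = ks 1 m.
Proof. by []. Qed.

Lemma ksign0l m : ks 0 m = 1.
Proof. by []. Qed.

Lemma ksign11 : ks 1 1 = -1.
Proof. by rewrite /ksign /= expr1. Qed.

Lemma ksignMK n m x : ks n m * (ks n m * x) = x.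
Proof. exact: signrMK. Qed.

Lemma ksignK n m : ks n m * ks n m = 1.
Proof. by rewrite -signr_addb addbb. Qed.

Lemma commr_ksign n m x : ks n m * x = x * ks n m.
Proof. by apply: esym; apply: commr_sign. Qed.

Lemma mulr_ksignCA n m x w : x * (ks n m * w) = ks n m * (x * w).
Proof. by rewrite mulrA -commr_ksign -mulrA. Qed.

Lemma ksign_morph (f : R -> R) : f 0 = 0 -> (forall x y, f (x + y) = f x + f y) ->
  forall n m x, f (ks n m * x) = ks n m * f x.
Proof.
move=> f0 fD n m x; have fN z : f (- z) = - f z.
  by apply/eqP; rewrite -addr_eq0 -fD addNr f0.
by rewrite /ksign; case: (_ && _); rewrite ?expr0 ?expr1 ?mul1r ?mulN1r ?fN.
Qed.

End KoszulSign.

Section Grading.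
Variables (R : pzRingType) (pi : int -> R -> R).
Hypothesis Hg : is_grading pi.

Lemma piD n x y : pi n (x + y) = pi n x + pi n y.
Proof. by case: Hg => H _ _ _ _; apply: H. Qed.

Lemma pi0 n : pi n 0 = 0.
Proof. by apply: (addrI (pi n 0)); rewrite -piD !addr0. Qed.

Lemma piN n x : pi n (- x) = - pi n x.
Proof. by apply/eqP; rewrite -addr_eq0 -piD addNr pi0. Qed.

Lemma piB n x y : pi n (x - y) = pi n x - pi n y.
Proof. by rewrite piD piN. Qed.

Lemma pi_sum n (I : Type) (r : seq I) (P : pred I) (F : I -> R) :
  pi n (\sum_(i <- r | P i) F i) = \sum_(i <- r | P i) pi n (F i).
Proof. by apply: (big_morph (pi n)); [apply: piD | apply: pi0]. Qed.

Lemma pi_ksign n a b x : pi n (ksign R a b * x) = ksign R a b * pi n x.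
Proof. exact: (ksign_morph (pi0 n) (piD n)). Qed.

Lemma pipi m n x : pi m (pi n x) = if m == n then pi n x else 0.
Proof. by case: Hg => _ H _ _ _; apply: H. Qed.

Lemma homog_pi n x : homog pi n (pi n x).
Proof. by rewrite /homog pipi eqxx. Qed.

Lemma pi_homog m n x : homog pi n x -> pi m x = if m == n then x else 0.
Proof. by rewrite /homog => <-; rewrite pipi. Qed.

Lemma homog1 : homog pi 0 1.
Proof. by case: Hg. Qed.

Lemma homogM m n x y : homog pi m x -> homog pi n y -> homog pi (m + n) (x * y).
Proof. by case: Hg => _ _ _ _ H; apply: H. Qed.

Lemma homog0 n : homog pi n 0.
Proof. by rewrite /homog pi0. Qed.

Lemma homogD n x y : homog pi n x -> homog pi n y -> homog pi n (x + y).
Proof. by rewrite /homog piD => -> ->. Qed.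

Lemma homog_ksign n a b x : homog pi n x -> homog pi n (ksign R a b * x).
Proof. by rewrite /homog pi_ksign => ->. Qed.

Lemma gsuppP x : uniq (gsupp pi x) /\ x = \sum_(k <- gsupp pi x) pi k x.
Proof.
rewrite /gsupp; apply: (epsilon_spec (inhabits [::])
  (fun s : seq int => uniq s /\ x = \sum_(k <- s) pi k x)).
by case: Hg => _ _ H _ _; apply: H.
Qed.

Lemma uniq_gsupp x : uniq (gsupp pi x).
Proof. by case: (gsuppP x). Qed.

Lemma gsupp_decomp x : x = \sum_(k <- gsupp pi x) pi k x.
Proof. by case: (gsuppP x). Qed.

Definition supp_in (s : seq int) (x : R) := forall k, k \notin s -> pi k x = 0.

Lemma supp_in_gsupp x : supp_in (gsupp pi x) x.
Proof.
move=> k ks; rewrite [x in pi k x]gsupp_decomp pi_sum big1_seq // => j /andP [_ js].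
by rewrite pipi; case: eqP => // ekj; move: ks; rewrite ekj js.
Qed.

Lemma supp_in_homog n x : homog pi n x -> supp_in [:: n] x.
Proof. by move=> h k; rewrite inE (pi_homog _ h) => /negbTE ->. Qed.

Lemma supp_inD s x y : supp_in s x -> supp_in s y -> supp_in s (x + y).
Proof. by move=> cx cy k ks; rewrite piD cx // cy // addr0. Qed.

Lemma supp_in_undup_catl s t x : supp_in s x -> supp_in (undup (s ++ t)) x.
Proof. by move=> cx k; rewrite mem_undup mem_cat negb_or => /andP[/cx]. Qed.

Lemma supp_in_undup_catr s t x : supp_in t x -> supp_in (undup (s ++ t)) x.
Proof. by move=> cx k; rewrite mem_undup mem_cat negb_or => /andP[_ /cx]. Qed.

Lemma supp_in_shift s p x y : (forall k, pi (k - p) x = 0 -> pi k y = 0) ->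
  supp_in s x -> supp_in [seq n + p | n <- s] y.
Proof.
move=> e cx k ks; apply/e/cx; apply: contra ks => kx.
by apply/mapP; exists (k - p); rewrite ?subrK.
Qed.

Lemma big_supp_in (M : zmodType) (F : int -> R -> M) (x : R) s t :
  (forall k, F k 0 = 0) -> uniq s -> uniq t -> supp_in s x -> supp_in t x ->
  \sum_(k <- s) F k (pi k x) = \sum_(k <- t) F k (pi k x).
Proof.
move=> F0 us ut cs ct.
have restr u v : supp_in v x ->
    \sum_(k <- u) F k (pi k x) = \sum_(k <- u | k \in v) F k (pi k x).
  move=> cv; rewrite [RHS]big_mkcond /=; apply: eq_bigr => k _.
  by case: ifP => // /negbT kv; rewrite cv // F0.
rewrite (restr s t ct) (restr t s cs) -(big_filter s) -(big_filter t).
apply: perm_big; apply: uniq_perm; rewrite ?filter_uniq // => k.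
by rewrite !mem_filter andbC.
Qed.

Lemma homog_ind (P : R -> Prop) : P 0 -> (forall x y, P x -> P y -> P (x + y)) ->
  (forall n x, homog pi n x -> P x) -> forall x, P x.
Proof.
move=> P0 PD Ph x; rewrite (gsupp_decomp x); elim: (gsupp pi x) => [|k s IH].
  by rewrite big_nil.
by rewrite big_cons; apply: PD => //; apply: (Ph k); apply: homog_pi.
Qed.

Lemma pi_mulhl m n x y : homog pi m x -> pi n (x * y) = x * pi (n - m) y.
Proof.
move=> hx; rewrite [y in LHS]gsupp_decomp [y in RHS]gsupp_decomp mulr_sumr.
rewrite pi_sum pi_sum mulr_sumr; apply: eq_bigr => k _.
rewrite pipi (pi_homog _ (homogM hx (homog_pi k y))) subr_eq (addrC k).
by case: eqP => _; rewrite ?mulr0.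
Qed.

End Grading.

Section Twist.
Variables (R : pzRingType) (pi : int -> R -> R).
Hypothesis Hg : is_grading pi.
Local Notation tw := (twist pi).

Lemma twist_supp_in n x s : uniq s -> supp_in pi s x ->
  tw n x = \sum_(k <- s) ksign R n k * pi k x.
Proof.
move=> us cs; rewrite /twist.
apply: (big_supp_in (F := fun k v => ksign R n k * v)) => //.
- by move=> k; rewrite mulr0.
- exact: uniq_gsupp.
- exact: supp_in_gsupp.
Qed.

Lemma twist_homog n m x : homog pi m x -> tw n x = ksign R n m * x.
Proof.
by move=> h; rewrite (@twist_supp_in n x [:: m] erefl (supp_in_homog Hg h)) big_seq1 h.
Qed.

Lemma twistD n x y : tw n (x + y) = tw n x + tw n y.
Proof.
set s := undup (gsupp pi x ++ gsupp pi y).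
have us : uniq s by apply: undup_uniq.
have cx : supp_in pi s x by apply/supp_in_undup_catl/supp_in_gsupp.
have cy : supp_in pi s y by apply/supp_in_undup_catr/supp_in_gsupp.
rewrite (twist_supp_in n us (supp_inD Hg cx cy)) (twist_supp_in n us cx).
rewrite (twist_supp_in n us cy) -big_split /=.
by apply: eq_bigr => k _; rewrite piD // mulrDr.
Qed.

Lemma twist0 n : tw n 0 = 0.
Proof. by rewrite (twist_homog n (homog0 Hg 0)) mulr0. Qed.

Lemma twistN n x : tw n (- x) = - tw n x.
Proof. by apply/eqP; rewrite -addr_eq0 -twistD addNr twist0. Qed.

Lemma twist_sum n (I : Type) (r : seq I) (P : pred I) (F : I -> R) :
  tw n (\sum_(i <- r | P i) F i) = \sum_(i <- r | P i) tw n (F i).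
Proof. by apply: (big_morph (tw n)); [apply: twistD | apply: twist0]. Qed.

Lemma twist_ksign n a b x : tw n (ksign R a b * x) = ksign R a b * tw n x.
Proof. exact: (ksign_morph (twist0 n) (twistD n)). Qed.

Lemma homog_twist n m x : homog pi m x -> homog pi m (tw n x).
Proof. by move=> h; rewrite (twist_homog n h); apply: homog_ksign. Qed.

Lemma twist_twist n m x : tw n (tw m x) = tw (n + m) x.
Proof.
elim/(homog_ind Hg): x => [|x y IHx IHy|k x h]; first by rewrite !twist0.
  by rewrite !twistD IHx IHy.
rewrite (twist_homog m h) (twist_homog n (homog_ksign Hg m k h)).
by rewrite (twist_homog _ h) mulrA ksignDl.
Qed.

Lemma twist_eq n m x : ksign R n =1 ksign R m -> tw n x = tw m x.
Proof.
move=> e; elim/(homog_ind Hg): x => [|x y IHx IHy|k x h]; first by rewrite !twist0.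
  by rewrite !twistD IHx IHy.
by rewrite !(twist_homog _ h) e.
Qed.

Lemma twist_id x : tw 0 x = x.
Proof.
elim/(homog_ind Hg): x => [|x y IHx IHy|k x h]; first by rewrite twist0.
  by rewrite twistD IHx IHy.
by rewrite (twist_homog _ h) ksign0l mul1r.
Qed.

Lemma twist1K x : tw 1 (tw 1 x) = x.
Proof. by rewrite twist_twist (@twist_eq _ 0) ?twist_id. Qed.

Lemma twist_mulhl n p r x : homog pi p r -> tw n (r * x) = ksign R n p * (r * tw n x).
Proof.
move=> hr; elim/(homog_ind Hg): x => [|x y IHx IHy|k x h].
- by rewrite mulr0 !twist0 mulr0 mulr0.
- by rewrite mulrDr !twistD IHx IHy !mulrDr.
rewrite (twist_homog n (homogM Hg hr h)) (twist_homog n h) ksignDr.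
by rewrite mulr_ksignCA -mulrA.
Qed.

Lemma twist1M x y : tw 1 (x * y) = tw 1 x * tw 1 y.
Proof.
elim/(homog_ind Hg): x => [|x x' IHx IHx'|m x hm].
- by rewrite mul0r !twist0 mul0r.
- by rewrite mulrDl !twistD IHx IHx' mulrDl.
by rewrite (twist_mulhl 1 y hm) (twist_homog 1 hm) -mulrA.
Qed.

End Twist.

Section DgRing.
Variables (R : pzRingType) (pi : int -> R -> R) (d : R -> R).
Hypotheses (Hg : is_grading pi) (Hd : dg_ring pi d).
Local Notation tw := (twist pi).

Lemma dD x y : d (x + y) = d x + d y.
Proof. by case: Hd => H _ _ _; apply: H. Qed.

Lemma d0 : d 0 = 0.
Proof. by apply: (addrI (d 0)); rewrite -dD !addr0. Qed.

Lemma dN x : d (- x) = - d x.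
Proof. by apply/eqP; rewrite -addr_eq0 -dD addNr d0. Qed.

Lemma dB x y : d (x - y) = d x - d y.
Proof. by rewrite dD dN. Qed.

Lemma d_sum (I : Type) (r : seq I) (P : pred I) (F : I -> R) :
  d (\sum_(i <- r | P i) F i) = \sum_(i <- r | P i) d (F i).
Proof. by apply: (big_morph d); [apply: dD | apply: d0]. Qed.

Lemma d_ksign n m x : d (ksign R n m * x) = ksign R n m * d x.
Proof. exact: (ksign_morph d0 dD). Qed.

Lemma dd x : d (d x) = 0.
Proof. by case: Hd => _ H _ _; apply: H. Qed.

Lemma homog_d n x : homog pi n x -> homog pi (n + 1) (d x).
Proof. by case: Hd => _ _ H _; apply: H. Qed.

Lemma d_mulhl n a b : homog pi n a -> d (a * b) = d a * b + ksign R 1 n * (a * d b).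
Proof. by case: Hd => _ _ _ H; apply: H. Qed.

Lemma d_pi n x : d (pi n x) = pi (n + 1) (d x).
Proof.
rewrite [x in LHS](gsupp_decomp Hg) [x in RHS](gsupp_decomp Hg).
rewrite !(pi_sum Hg) !d_sum (pi_sum Hg); apply: eq_bigr => k _.
rewrite (pipi Hg) (pi_homog Hg _ (homog_d (homog_pi Hg k x))) (inj_eq (addIr 1)).
by case: eqP; rewrite ?d0.
Qed.

Lemma d1 : d 1 = 0.
Proof.
have := d_mulhl 1 (homog1 Hg); rewrite !mulr1 mul1r ksignC ksign0l mul1r.
by move=> h; apply: (addrI (d 1)); rewrite addr0 -h.
Qed.

Lemma d_twist1 x : d (tw 1 x) = - tw 1 (d x).
Proof.
elim/(homog_ind Hg): x => [|x y IHx IHy|n x h].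
- by rewrite (twist0 Hg) d0 (twist0 Hg) oppr0.
- by rewrite (twistD Hg) !dD (twistD Hg) opprD IHx IHy.
rewrite (twist_homog Hg 1 h) (twist_homog Hg 1 (homog_d h)) d_ksign.
by rewrite ksignDr ksign11 mulrN1 mulNr opprK.
Qed.

Lemma cycle_pi n x : d x = 0 -> d (pi n x) = 0.
Proof. by move=> h; rewrite d_pi h (pi0 Hg). Qed.

Lemma cycle_twist n x : d x = 0 -> d (tw n x) = 0.
Proof.
move=> h; rewrite (twist_supp_in Hg n (uniq_gsupp Hg x) (supp_in_gsupp Hg (x:=x))) d_sum.
by apply: big1 => k _; rewrite d_ksign cycle_pi // mulr0.
Qed.

Lemma d_mul_cyclel z b : d z = 0 -> d (z * b) = tw 1 z * d b.
Proof.
move=> hz; rewrite [z in LHS](gsupp_decomp Hg) mulr_suml d_sum.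
rewrite (twist_supp_in Hg 1 (uniq_gsupp Hg z) (supp_in_gsupp Hg (x:=z))) mulr_suml.
apply: eq_bigr => k _; rewrite (d_mulhl _ (homog_pi Hg k z)) cycle_pi // mul0r add0r.
by rewrite mulrA.
Qed.

Lemma d_mul_cycler a z : d z = 0 -> d (a * z) = d a * z.
Proof.
move=> hz; rewrite [a in LHS](gsupp_decomp Hg) [a in RHS](gsupp_decomp Hg).
rewrite mulr_suml !d_sum mulr_suml; apply: eq_bigr => k _.
by rewrite (d_mulhl _ (homog_pi Hg k a)) hz !mulr0 addr0.
Qed.

Lemma cycleM x z : d x = 0 -> d z = 0 -> d (x * z) = 0.
Proof. by move=> hx hz; rewrite d_mul_cycler // hx mul0r. Qed.

Lemma kerdD x y : kerd d x -> kerd d y -> kerd d (x + y).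
Proof. by move=> /eqP hx /eqP hy; apply/eqP; rewrite dD hx hy addr0. Qed.

Lemma cycle_ind (P : R -> Prop) : P 0 ->
  (forall x z, d x = 0 -> d z = 0 -> P x -> P z -> P (x + z)) ->
  (forall n x, d x = 0 -> homog pi n x -> P x) ->
  forall x, d x = 0 -> P x.
Proof.
move=> P0 PD Ph x hx; rewrite (gsupp_decomp Hg x).
elim: (gsupp pi x) => [|k s IH]; first by rewrite big_nil.
rewrite big_cons; apply: PD => //.
- exact: cycle_pi.
- by rewrite d_sum; apply: big1 => j _; apply: cycle_pi.
- by apply: (Ph k); [apply: cycle_pi | apply: homog_pi].
Qed.

End DgRing.

Definition zpart (R : pzRingType) (d : R -> R) (u x : R) := x - u * d x.
Definition zcorr (R : pzRingType) (pi : int -> R -> R) (d : R -> R) (u x : R) :=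
  u * u * twist pi 1 (d x).

Section Contraction.
Variables (R : pzRingType) (pi : int -> R -> R).
Context {d : R -> R} {u : R}.
Hypotheses (Hg : is_grading pi) (Hd : dg_ring pi d).
Hypotheses (Hu : homog pi (-1) u) (du : d u = 1).
Hypothesis u_grcentral : forall m a, homog pi m a -> u * a = ksign R (-1) m * (a * u).
Local Notation tw := (twist pi).

Local Notation p := (zpart d u).
Local Notation q := (zcorr pi d u).

Lemma d_mulu w : d (u * w) = w - u * d w.
Proof. by rewrite (d_mulhl Hd w Hu) du mul1r /ksign /= expr1 mulN1r. Qed.

Lemma d_zpart x : d (p x) = 0.
Proof. by rewrite /zpart (dB Hd) d_mulu (dd Hd) mulr0 subr0 subrr. Qed.

Lemma zpart_cycle z : d z = 0 -> p z = z.
Proof. by move=> h; rewrite /zpart h mulr0 subr0. Qed.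

Lemma zpart_split x : x = p x + u * d x.
Proof. by rewrite /zpart subrK. Qed.

Lemma zpartD x y : p (x + y) = p x + p y.
Proof. by rewrite /zpart (dD Hd) mulrDr opprD addrACA. Qed.

Lemma zpart0 : p 0 = 0.
Proof. by rewrite /zpart (d0 Hd) mulr0 subr0. Qed.

Lemma zpart_sum (I : Type) (r : seq I) (P : pred I) (F : I -> R) :
  p (\sum_(i <- r | P i) F i) = \sum_(i <- r | P i) p (F i).
Proof. by apply: (big_morph p); [apply: zpartD | apply: zpart0]. Qed.

Lemma zpart_ksign a b x : p (ksign R a b * x) = ksign R a b * p x.
Proof. exact: (ksign_morph zpart0 zpartD). Qed.

Lemma zpart_mulu w : p (u * w) = u * u * d w.
Proof. by rewrite /zpart d_mulu mulrBr opprB addrC subrK mulrA. Qed.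

Lemma pi_zpart n x : pi n (p x) = p (pi n x).
Proof. by rewrite /zpart (piB Hg) (d_pi Hg Hd) (pi_mulhl Hg _ _ Hu) opprK. Qed.

Lemma homog_zpart n x : homog pi n x -> homog pi n (p x).
Proof. by rewrite /homog pi_zpart => ->. Qed.

Lemma zpart_mulr x z : d z = 0 -> p (x * z) = p x * z.
Proof. by move=> hz; rewrite /zpart (d_mul_cycler Hg Hd _ hz) mulrBl mulrA. Qed.

Lemma mulu_twist a : u * a = tw 1 a * u.
Proof.
elim/(homog_ind Hg): a => [|a b IHa IHb|m a h].
- by rewrite mulr0 (twist0 Hg) mul0r.
- by rewrite mulrDr (twistD Hg) mulrDl IHa IHb.
by rewrite (twist_homog Hg _ h) (u_grcentral h) -mulrA; congr (_ * _).
Qed.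

Lemma mulr_u a : a * u = u * tw 1 a.
Proof. by rewrite mulu_twist (twist1K Hg). Qed.

Lemma twist1_u : tw 1 u = - u.
Proof. by rewrite (twist_homog Hg _ Hu) /ksign /= expr1 mulN1r. Qed.

Lemma uu_comm a : u * u * a = a * (u * u).
Proof. by rewrite -mulrA (mulu_twist a) mulrA (mulu_twist (tw 1 a)) (twist1K Hg) -mulrA. Qed.

Lemma uu_oppr w : - (u * u * w) = u * u * w.
Proof.
have uu2 : u * u + u * u = 0 by rewrite {1}mulu_twist twist1_u mulNr addNr.
by apply/eqP; rewrite eq_sym -addr_eq0 -mulrDl uu2 mul0r.
Qed.

Lemma d_uu : d (u * u) = 0.
Proof. by rewrite d_mulu du mulr1 subrr. Qed.

Lemma zpart_mull z x : d z = 0 -> p (z * x) = z * p x.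
Proof.
move=> hz; rewrite /zpart (d_mul_cyclel Hg Hd _ hz) mulrBr.
by rewrite mulrA -mulr_u mulrA.
Qed.

Lemma d_zcorr x : d (q x) = 0.
Proof. by rewrite (d_mul_cyclel Hg Hd _ d_uu) (cycle_twist Hg Hd) ?(dd Hd) ?mulr0. Qed.

Lemma zcorrD x y : q (x + y) = q x + q y.
Proof. by rewrite /zcorr (dD Hd) (twistD Hg) mulrDr. Qed.

Lemma zcorr_mull z x : d z = 0 -> q (z * x) = z * q x.
Proof.
move=> hz; rewrite /zcorr (d_mul_cyclel Hg Hd _ hz) (twist1M Hg) (twist1K Hg).
by rewrite mulrA uu_comm -mulrA.
Qed.

Lemma homog_zcorr n x : homog pi n x -> homog pi (n - 1) (q x).
Proof.
move=> h; have -> : n - 1 = (-1 + -1) + (n + 1) by ring.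
apply: (homogM Hg (homogM Hg Hu Hu)); apply: (homog_twist Hg).
exact: (homog_d Hd).
Qed.

Lemma zpart_mul a b : p (a * b) = p a * p b + q a * d b.
Proof.
have za := d_zpart a; have zb := d_zpart b; have dda := dd Hd a; have ddb := dd Hd b.
have cyc_ab : d (tw 1 (d a) * d b) = 0 by rewrite (cycleM Hg Hd) ?(cycle_twist Hg Hd).
have pzz : p (p a * p b) = p a * p b.
  by rewrite zpart_cycle ?(cycleM Hg Hd).
have pzu : p (p a * (u * d b)) = 0.
  rewrite mulrA mulr_u -mulrA zpart_mulu (cycleM Hg Hd) ?mulr0 //.
  exact: (cycle_twist Hg Hd).
have puz : p (u * d a * p b) = 0.
  by rewrite -mulrA zpart_mulu (cycleM Hg Hd) ?mulr0.
have puu : p (u * d a * (u * d b)) = q a * d b.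
  have -> : u * d a * (u * d b) = u * u * (tw 1 (d a) * d b).
    by rewrite -!mulrA (mulrA (d a)) mulr_u -!mulrA.
  by rewrite zpart_mull ?d_uu // zpart_cycle // /zcorr mulrA.
have expand x y z w : (x + y) * (z + w) = x * z + x * w + (y * z + y * w).
  by rewrite mulrDl !mulrDr.
rewrite {1}(zpart_split a) {1}(zpart_split b) expand !zpartD.
by rewrite pzz pzu puz puu addr0 add0r.
Qed.

Lemma zpart_mul3 a t b : d t = 0 ->
  p (a * t * b) = p a * t * p b + q a * tw 1 t * d b.
Proof.
move=> ht; rewrite zpart_mul zpart_mulr // /zcorr (d_mul_cycler Hg Hd _ ht).
by rewrite (twist1M Hg) !mulrA.
Qed.

Lemma grcentral_cycles z : d z = 0 -> grcentral pi (kerd d) z -> grcentral pi predT z.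
Proof.
move=> hz hc n m a _ ha.
have h0 : pi n z * p a = ksign R n m * (p a * pi n z).
  by apply: hc; [apply/eqP; apply: d_zpart | apply: homog_zpart].
have h1 : pi n z * d a = ksign R n (m + 1) * (d a * pi n z).
  by apply: hc; [apply/eqP; apply: (dd Hd) | apply: (homog_d Hd)].
rewrite [a in LHS]zpart_split [a in RHS]zpart_split mulrDr mulrDl h0 mulrDr.
congr (_ + _); rewrite mulrA mulr_u -mulrA (twist_homog Hg _ (homog_pi Hg n z)) -mulrA h1.
have sgn : ksign R 1 n * ksign R n (m + 1) = ksign R n m.
  by rewrite ksignDr (ksignC 1 n) mulr_ksignCA ksignK mulr1.
by rewrite (mulr_ksignCA 1 n u) (mulr_ksignCA n (m + 1) u) mulrA sgn !mulrA.
Qed.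

End Contraction.

Section GradedAlgebra.
Variables (K A : pzRingType) (piK : int -> K -> K) (piA : int -> A -> A).
Variable iota : {rmorphism K -> A}.
Hypotheses (HgK : is_grading piK) (HgA : is_grading piA).
Hypothesis iota_homog : forall n r, homog piK n r -> homog piA n (iota r).
Hypothesis iota_central : forall r, grcentral piA predT (iota r).
Local Notation tw := (twist piA).

Lemma iota_pi n r : iota (piK n r) = piA n (iota r).
Proof.
elim/(homog_ind HgK): r => [|r s IHr IHs|m r h].
- by rewrite (pi0 HgK) rmorph0 (pi0 HgA).
- by rewrite (piD HgK) !rmorphD (piD HgA) IHr IHs.
rewrite (pi_homog HgK _ h) (pi_homog HgA _ (iota_homog h)).
by case: eqP; rewrite ?rmorph0.
Qed.

Lemma iota_twist n r : iota (twist piK n r) = tw n (iota r).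
Proof.
elim/(homog_ind HgK): r => [|r s IHr IHs|m r h].
- by rewrite (twist0 HgK) rmorph0 (twist0 HgA).
- by rewrite (twistD HgK) !rmorphD (twistD HgA) IHr IHs.
rewrite (twist_homog HgK _ h) (twist_homog HgA _ (iota_homog h)) rmorphM.
by congr (_ * _); rewrite /ksign; case: (_ && _); rewrite ?rmorphN ?rmorph1.
Qed.

Lemma iota_comm r p m a : homog piK p r -> homog piA m a ->
  iota r * a = ksign A p m * (a * iota r).
Proof. by move=> hr ha; have := iota_central r p isT ha; rewrite -iota_pi hr. Qed.

Lemma iota_mul_twist r p n x : homog piK p r -> iota r * tw n x = tw (n + p) x * iota r.
Proof.
move=> hr; elim/(homog_ind HgA): x => [|x z IHx IHz|k x h].
- by rewrite !(twist0 HgA) mulr0 mul0r.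
- by rewrite !(twistD HgA) mulrDr mulrDl IHx IHz.
rewrite (twist_homog HgA _ h) (twist_homog HgA _ h) mulr_ksignCA (iota_comm hr h).
by rewrite ksignDl -!mulrA.
Qed.

Section GradedEndomorphisms.
Variables (SK : pred K) (SA : pred A).
Local Notation gendS := (gend piK piA SK SA iota).

Lemma gend_eq f g : gendS f -> f =1 g -> gendS g.
Proof.
case=> k [dg [fs [H1 H2]]] e; exists k, dg, fs; split => // x.
by rewrite -e H2.
Qed.

Lemma gend0 : gendS (fun _ => 0).
Proof.
by exists 0%N, (fun i => 0), (fun i x => 0); split => [[]|x] //; rewrite big_ord0.
Qed.

Lemma gend_glin n f : glin piK piA SK SA iota n f -> gendS f.
Proof.
move=> h; exists 1%N, (fun _ => n), (fun _ => f); split => // x.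
by rewrite big_ord1.
Qed.

Lemma gendD f g : gendS f -> gendS g -> gendS (fun x => f x + g x).
Proof.
case=> k1 [dg1 [fs1 [H1 E1]]]; case=> k2 [dg2 [fs2 [H2 E2]]].
exists (k1 + k2)%N.
exists (fun j => match split j with inl i => dg1 i | inr i => dg2 i end).
exists (fun j => match split j with inl i => fs1 i | inr i => fs2 i end).
split; first by move=> j; case: (split j).
move=> x; rewrite big_split_ord /= E1 E2.
by congr (_ + _); apply: eq_bigr => i _; rewrite ?(unsplitK (inl i)) ?(unsplitK (inr i)).
Qed.

Lemma gend_sum (I : Type) (r : seq I) (F : I -> A -> A) :
  (forall i, gendS (F i)) -> gendS (fun x => \sum_(i <- r) F i x).
Proof.
move=> H; elim: r => [|i r IH].
  by apply: (gend_eq gend0) => x; rewrite big_nil.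
by apply: (gend_eq (gendD (H i) IH)) => x; rewrite big_cons.
Qed.

Local Notation az := (azphi piA SA).

Lemma azphi_supp_in a b s x : uniq s -> supp_in piA s b ->
  az a b x = if SA x then \sum_(n <- s) a * tw n x * piA n b else 0.
Proof.
move=> us cs; rewrite /azphi; case: (SA x) => //.
apply: (big_supp_in (F := fun n v => a * tw n x * v)) => //.
- by move=> k; rewrite mulr0.
- exact: (uniq_gsupp HgA).
- exact: (supp_in_gsupp HgA).
Qed.

Lemma azphiDl a a' b : az (a + a') b = (fun x => az a b x + az a' b x).
Proof.
apply: functional_extensionality => x; rewrite /azphi.
case: (SA x); last by rewrite addr0.
by rewrite -big_split; apply: eq_bigr => n _; rewrite !mulrDl.
Qed.

Lemma azphiDr a b b' : az a (b + b') = (fun x => az a b x + az a b' x).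
Proof.
apply: functional_extensionality => x.
set s := undup (gsupp piA b ++ gsupp piA b').
have us : uniq s by apply: undup_uniq.
have cb : supp_in piA s b by apply/supp_in_undup_catl/(supp_in_gsupp HgA).
have cb' : supp_in piA s b' by apply/supp_in_undup_catr/(supp_in_gsupp HgA).
rewrite (azphi_supp_in _ _ us (supp_inD HgA cb cb')) (azphi_supp_in _ _ us cb).
rewrite (azphi_supp_in _ _ us cb'); case: (SA x); last by rewrite addr0.
by rewrite -big_split; apply: eq_bigr => n _; rewrite (piD HgA) mulrDr.
Qed.

Lemma azphi0l b x : az 0 b x = 0.
Proof. by rewrite /azphi; case: (SA x) => //; apply: big1 => n _; rewrite !mul0r. Qed.

Lemma azphi0r a x : az a 0 x = 0.
Proof.
rewrite (azphi_supp_in _ _ (s := [::]) _ (fun k _ => pi0 HgA k)) //.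
by case: (SA x); rewrite ?big_nil.
Qed.

Lemma azphi_balanced a r b : az (a * iota r) b = az a (iota r * b).
Proof.
apply: functional_extensionality => x.
elim/(homog_ind HgK): r => [|r s IHr IHs|p r hp].
- by rewrite rmorph0 mulr0 mul0r azphi0l azphi0r.
- by rewrite rmorphD mulrDr mulrDl azphiDl azphiDr /= IHr IHs.
have hb := iota_homog hp.
have cs : supp_in piA [seq n + p | n <- gsupp piA b] (iota r * b).
  apply: (supp_in_shift _ (supp_in_gsupp HgA (x:=b))) => k.
  by rewrite (pi_mulhl HgA _ _ hb) => ->; rewrite mulr0.
have us : uniq [seq n + p | n <- gsupp piA b].
  by rewrite map_inj_uniq ?(uniq_gsupp HgA) // => i j /addIr.
rewrite (azphi_supp_in _ _ us cs).
rewrite (azphi_supp_in _ _ (uniq_gsupp HgA b) (supp_in_gsupp HgA (x:=b))).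
case: (SA x) => //; rewrite big_map; apply: eq_bigr => n _.
by rewrite (pi_mulhl HgA _ _ hb) addrK -(mulrA a) (iota_mul_twist n x hp) !mulrA.
Qed.

End GradedEndomorphisms.

End GradedAlgebra.

Section FirstKind.
Variables (K A : pzRingType) (piK : int -> K -> K) (piA : int -> A -> A).
Variables (dK : K -> K) (dA : A -> A) (iota : {rmorphism K -> A}).
Hypotheses (HgK : is_grading piK) (HgA : is_grading piA).
Hypotheses (HdK : dg_ring piK dK) (HdA : dg_ring piA dA).
Hypothesis HgcK : graded_commutative piK.
Hypothesis Halg : dg_algebra_over piK piA dK dA iota.
Hypothesis Haz : graded_azumaya piK piA predT predT iota.
Variable y : K.
Hypotheses (Hy : homog piK (-1) y) (dy : dK y = 1).

Local Notation u := (iota y).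
Local Notation ZK := (kerd dK).
Local Notation ZA := (kerd dA).
Local Notation tw := (twist piA).
Local Notation pA := (zpart dA u).
Local Notation qA := (zcorr piA dA u).
Local Notation pK := (zpart dK y).
Local Notation qK := (zcorr piK dK y).

Lemma iota_homog n r : homog piK n r -> homog piA n (iota r).
Proof. by case: Halg => H _ _; apply: H. Qed.

Lemma d_iota r : dA (iota r) = iota (dK r).
Proof. by case: Halg => _ H _; apply: H. Qed.

Lemma iota_central r : grcentral piA predT (iota r).
Proof. by case: Halg. Qed.

Lemma iota_inj : injective iota.
Proof.
case: Haz => _ _ H _ _ r s e; apply/eqP; rewrite -subr_eq0; apply/eqP.
by apply: H => //; rewrite rmorphB e subrr.
Qed.

Lemma cycle_iota r : dK r = 0 -> dA (iota r) = 0.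
Proof. by move=> h; rewrite d_iota h rmorph0. Qed.

Lemma iota_cycle r : dA (iota r) = 0 -> dK r = 0.
Proof. by rewrite d_iota -(rmorph0 iota) => /iota_inj. Qed.

Lemma y_grcentral m r : homog piK m r -> y * r = ksign K (-1) m * (r * y).
Proof. exact: HgcK. Qed.

Lemma u_homog : homog piA (-1) u.
Proof. exact: iota_homog. Qed.

Lemma du : dA u = 1.
Proof. by rewrite d_iota dy rmorph1. Qed.

Lemma u_grcentral m a : homog piA m a -> u * a = ksign A (-1) m * (a * u).
Proof. exact: (iota_comm HgK HgA iota_homog iota_central Hy). Qed.

Lemma iota_zpart r : iota (pK r) = pA (iota r).
Proof. by rewrite /zpart rmorphB rmorphM d_iota. Qed.

Lemma iota_zcorr r : iota (qK r) = qA (iota r).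
Proof. by rewrite /zcorr !rmorphM (iota_twist HgK HgA iota_homog) d_iota. Qed.

Lemma kerd_zpart x : ZA (pA x).
Proof. by apply/eqP; apply: (d_zpart HdA u_homog du). Qed.

Lemma kerd_d x : ZA (dA x).
Proof. by apply/eqP; apply: (dd HdA). Qed.

Lemma kerd_zcorr x : ZA (qA x).
Proof. by apply/eqP; apply: (d_zcorr HgA HdA u_homog du). Qed.

Lemma kerd_twist_d x : ZA (tw 1 (dA x)).
Proof. by apply/eqP; apply: (cycle_twist HgA HdA); apply: (dd HdA). Qed.

Lemma kerd_yy : ZK (y * y).
Proof. by apply/eqP; apply: iota_cycle; rewrite rmorphM (d_uu HdA u_homog du). Qed.

Lemma kerd_gr_fg_projective : gr_fg_projective piK piA ZK ZA iota.
Proof.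
case: Haz => [[[k [e [dg [f [He _ [Hadd Hlin] Hhom Hrec]]]]] _] _ _ _ _].
have sl (i : 'I_k) : split (lshift k i) = inl i := unsplitK (inl i).
have sr (i : 'I_k) : split (rshift k i) = inr i := unsplitK (inr i).
exists (k + k)%N.
exists (fun j => match split j with inl i => pA (e i) | inr i => dA (e i) end).
exists (fun j => match split j with inl i => dg i | inr i => dg i + 1 end).
exists (fun j x => match split j with inl i => pK (f i x) | inr i => qK (f i x) end).
split.
- move=> j; case: (split j) => i; have [_ hi] := He i; split.
  + exact: kerd_zpart.
  + exact: (homog_zpart HgA HdA u_homog).
  + exact: kerd_d.
  + exact: (homog_d HdA).
- move=> j x _; case: (split j) => i; apply/eqP.
    exact: (d_zpart HdK Hy dy).
  exact: (d_zcorr HgK HdK Hy dy).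
- split => [j x z _ _ | j r x /eqP hr _]; case: (split j) => i; rewrite ?Hadd ?Hlin //.
  + exact: (zpartD HdK).
  + exact: (zcorrD HgK HdK).
  + exact: (zpart_mull HgK HdK y_grcentral).
  + exact: (zcorr_mull HgK HdK y_grcentral).
- move=> j m x _ hx; case: (split j) => i.
    by apply: (homog_zpart HgK HdK Hy); apply: Hhom.
  have -> : m - (dg i + 1) = m - dg i - 1 by ring.
  by apply: (homog_zcorr HgK HdK Hy); apply: Hhom.
move=> x /eqP hx; rewrite big_split_ord /=.
under eq_bigr do rewrite sl.
under [X in _ = _ + X]eq_bigr do rewrite sr.
rewrite -big_split /= -{1}(zpart_cycle (u := u) hx) {1}(Hrec x) // (zpart_sum HdA).
apply: eq_bigr => i _; rewrite (zpart_mul HgA HdA u_homog du u_grcentral).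
by rewrite iota_zpart iota_zcorr.
Qed.

Lemma kerd_gr_faithful : gr_faithful ZK ZA iota.
Proof.
move=> r _ h; apply: iota_inj; rewrite rmorph0 -[iota r]mulr1; apply: h.
by apply/eqP; apply: (d1 HgA HdA).
Qed.

Lemma kerd_grcentral_iota r : ZK r -> ZA (iota r) /\ grcentral piA ZA (iota r).
Proof.
move=> /eqP hr; split; first by apply/eqP; apply: cycle_iota.
by move=> n m a _; apply: iota_central.
Qed.

Lemma kerd_grcentre z : ZA z -> grcentral piA ZA z -> exists2 r, ZK r & iota r = z.
Proof.
move=> /eqP hz hc.
have hcA := grcentral_cycles HgA HdA u_homog du u_grcentral hz hc.
case: Haz => _ _ _ Hc _; have [r _ er] := Hc z isT hcA.
by exists r => //; apply/eqP; apply: iota_cycle; rewrite er.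
Qed.

Local Notation glinZ := (glin piK piA ZK ZA iota).
Local Notation gendZ := (gend piK piA ZK ZA iota).
Local Notation glinA := (glin piK piA predT predT iota).
Local Notation gendA := (gend piK piA predT predT iota).

Definition azphi_part m n a b x := if ZA x then piA m a * tw n x * piA n b else 0.

Lemma glin_azphi_part m n a b : dA a = 0 -> dA b = 0 -> glinZ (m + n) (azphi_part m n a b).
Proof.
move=> ha hb; have [ham hbn] := (cycle_pi HgA HdA m ha, cycle_pi HgA HdA n hb).
split.
- by move=> x /negbTE h; rewrite /azphi_part h.
- move=> x hx; rewrite /azphi_part hx; apply/eqP.
  by rewrite !(cycleM HgA HdA) // (cycle_twist HgA HdA); apply/eqP.
- move=> x z hx hz; rewrite /azphi_part (kerdD HdA hx hz) hx hz (twistD HgA).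
  by rewrite mulrDr mulrDl.
- move=> k x hx hk; rewrite /azphi_part hx (twist_homog HgA _ hk).
  have -> : k + (m + n) = m + k + n by ring.
  apply: (homogM HgA); last exact: homog_pi.
  by apply: (homogM HgA (homog_pi HgA m a)); apply: homog_ksign.
move=> p r x /eqP hr hp /eqP hx.
have hrx : ZA (iota r * x) by apply/eqP; rewrite (cycleM HgA HdA) ?cycle_iota.
rewrite /azphi_part hrx /kerd hx eqxx (twist_mulhl HgA n x (iota_homog hp)).
rewrite mulr_ksignCA -mulrA.
have e : piA m a * iota r = ksign A p m * (iota r * piA m a).
  by rewrite (iota_comm HgK HgA iota_homog iota_central hp (homog_pi HgA m a)) ksignMK.
rewrite (mulrA (piA m a)) e -!mulrA ksignDl -!mulrA.
by rewrite (ksignC p m) mulr_ksignCA.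
Qed.

Lemma gend_azphi_kerd a b : dA a = 0 -> dA b = 0 -> gendZ (azphi piA ZA a b).
Proof.
move=> ha hb.
pose F x := \sum_(m <- gsupp piA a) \sum_(n <- gsupp piA b) azphi_part m n a b x.
have gF : gendZ F.
  apply: gend_sum => m; apply: gend_sum => n; apply: gend_glin.
  exact: glin_azphi_part.
apply: (gend_eq gF) => x; rewrite /F /azphi /azphi_part.
case: (ZA x) => /=; last by rewrite big1 // => m _; rewrite big1.
rewrite exchange_big /=; apply: eq_bigr => n _.
by rewrite -!mulr_suml -(gsupp_decomp HgA a).
Qed.

Section BalancedLift.
Variables (G : zmodType) (beta : A -> A -> G).
Hypotheses
  (Hb1 : forall a a' b, ZA a -> ZA a' -> ZA b -> beta (a + a') b = beta a b + beta a' b)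
  (Hb2 : forall a b b', ZA a -> ZA b -> ZA b' -> beta a (b + b') = beta a b + beta a b')
  (Hb3 : forall a r b, ZA a -> ZK r -> ZA b -> beta (a * iota r) b = beta a (iota r * b)).

(* Restricting [x |-> a x b] to cycles gives the same two terms (see [end_restrict_azphi]). *)
Definition balanced_lift a b := beta (pA a) (pA b) + beta (qA a) (dA b).

Lemma balanced_liftDl a a' b :
  balanced_lift (a + a') b = balanced_lift a b + balanced_lift a' b.
Proof.
rewrite /balanced_lift (zpartD HdA) (zcorrD HgA HdA).
rewrite (Hb1 (kerd_zpart a) (kerd_zpart a') (kerd_zpart b)).
by rewrite (Hb1 (kerd_zcorr a) (kerd_zcorr a') (kerd_d b)) addrACA.
Qed.

Lemma balanced_liftDr a b b' :
  balanced_lift a (b + b') = balanced_lift a b + balanced_lift a b'.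
Proof.
rewrite /balanced_lift (zpartD HdA) (dD HdA).
rewrite (Hb2 (kerd_zpart a) (kerd_zpart b) (kerd_zpart b')).
by rewrite (Hb2 (kerd_zcorr a) (kerd_d b) (kerd_d b')) addrACA.
Qed.

Lemma balanced_lift_cycle a s b : dK s = 0 ->
  balanced_lift (a * iota s) b = balanced_lift a (iota s * b).
Proof.
move=> hs; have hs' := cycle_iota hs.
have hsK : ZK s by apply/eqP.
have htsK : ZK (twist piK 1 s) by apply/eqP; apply: (cycle_twist HgK HdK).
have q_as : qA (a * iota s) = qA a * iota (twist piK 1 s).
  rewrite /zcorr (d_mul_cycler HgA HdA _ hs') (twist1M HgA).
  by rewrite (iota_twist HgK HgA iota_homog) mulrA.
rewrite /balanced_lift (zpart_mulr HgA HdA _ hs') (zpart_mull HgA HdA u_grcentral _ hs').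
rewrite (Hb3 (kerd_zpart a) hsK (kerd_zpart b)) q_as (d_mul_cyclel HgA HdA _ hs').
by rewrite -(iota_twist HgK HgA iota_homog) (Hb3 (kerd_zcorr a) htsK (kerd_d b)).
Qed.

Lemma balanced_lift_u a b : balanced_lift (a * u) b = balanced_lift a (u * b).
Proof.
have p_au : pA (a * u) = qA a.
  rewrite (mulr_u HgA u_grcentral a) (zpart_mulu HdA u_homog du) (d_twist1 HgA HdA).
  by rewrite mulrN (uu_oppr HgA u_homog u_grcentral).
have q_au : qA (a * u) = u * u * pA a.
  rewrite /zcorr (mulr_u HgA u_grcentral a) (d_mulu HdA u_homog du) (twistD HgA).
  rewrite (twistN HgA) (twist1K HgA) (twist1M HgA) (twist1_u HgA u_homog).
  by rewrite (d_twist1 HgA HdA) (twistN HgA) (twist1K HgA) mulrNN.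
rewrite /balanced_lift p_au q_au (zpart_mulu HdA u_homog du) (d_mulu HdA u_homog du).
rewrite addrC; congr (_ + _); rewrite (uu_comm HgA u_grcentral) -rmorphM.
exact: (Hb3 (kerd_zpart a) kerd_yy (kerd_d b)).
Qed.

Lemma balanced_lift_balanced a r b :
  balanced_lift (a * iota r) b = balanced_lift a (iota r * b).
Proof.
rewrite [iota r](zpart_split (d := dA) (u := u)) -iota_zpart d_iota mulrDr mulrDl.
rewrite balanced_liftDl balanced_liftDr balanced_lift_cycle ?(d_zpart HdK Hy dy) //.
by rewrite mulrA balanced_lift_cycle ?(dd HdK) // balanced_lift_u mulrA.
Qed.

End BalancedLift.

(* Via [x = zpart x + u * d x], an endomorphism of [ker dA] extends to [A]; the twists
   are the Koszul signs of moving [g] past [u]. *)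
Definition end_extend (g : A -> A) x := g (pA x) + u * tw 1 (g (tw 1 (dA x))).
Definition end_restrict (f : A -> A) x := if ZA x then pA (f x) else 0.

Section GradedLinearOnCycles.
Variables (n : int) (g : A -> A).
Hypothesis Hglin : glinZ n g.

Lemma glin_outside x : ~~ ZA x -> g x = 0.
Proof. by case: Hglin => H _ _ _ _; apply: H. Qed.

Lemma glin_kerd x : ZA x -> ZA (g x).
Proof. by case: Hglin => _ H _ _ _; apply: H. Qed.

Lemma glinD x z : ZA x -> ZA z -> g (x + z) = g x + g z.
Proof. by case: Hglin => _ _ H _ _; apply: H. Qed.

Lemma glin_homog k x : ZA x -> homog piA k x -> homog piA (k + n) (g x).
Proof. by case: Hglin => _ _ _ H _; apply: H. Qed.

Lemma glin_iotaZ p r x : ZK r -> homog piK p r -> ZA x ->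
  g (iota r * x) = ksign A n p * (iota r * g x).
Proof. by case: Hglin => _ _ _ _ H; apply: H. Qed.

Lemma glin0 : g 0 = 0.
Proof.
have h0 : ZA 0 by apply/eqP; apply: (d0 HdA).
by apply: (addrI (g 0)); rewrite -glinD // !addr0.
Qed.

Lemma glin_ksign a b x : ZA x -> g (ksign A a b * x) = ksign A a b * g x.
Proof.
move=> hx; have hNx : ZA (- x) by apply/eqP; rewrite (dN HdA) (eqP hx) oppr0.
have gN : g (- x) = - g x by apply/eqP; rewrite -addr_eq0 -glinD // addNr glin0.
by rewrite /ksign; case: (_ && _); rewrite ?expr0 ?expr1 ?mul1r ?mulN1r.
Qed.

Lemma twist_glin_twist z : ZA z -> tw 1 (g (tw 1 z)) = ksign A n 1 * g z.
Proof.
move=> /eqP; move: z.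
apply: (cycle_ind HgA HdA (P := fun z => tw 1 (g (tw 1 z)) = ksign A n 1 * g z)).
- by rewrite (twist0 HgA) glin0 (twist0 HgA) mulr0.
- move=> x z hx hz IHx IHz; have [kx kz] : ZA x /\ ZA z by split; apply/eqP.
  have [ktx ktz] : ZA (tw 1 x) /\ ZA (tw 1 z).
    by split; apply/eqP; apply: (cycle_twist HgA HdA).
  by rewrite (twistD HgA) glinD // (twistD HgA) glinD // mulrDr IHx IHz.
move=> k x hx hk; have hx' : ZA x by apply/eqP.
rewrite (twist_homog HgA _ hk) glin_ksign // (twist_ksign HgA).
by rewrite (twist_homog HgA _ (glin_homog hx' hk)) ksignDr -mulrA ksignMK ksignC.
Qed.

Lemma end_extendD x z : end_extend g (x + z) = end_extend g x + end_extend g z.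
Proof.
rewrite /end_extend (zpartD HdA) glinD ?kerd_zpart // (dD HdA) (twistD HgA).
by rewrite glinD ?kerd_twist_d // (twistD HgA) mulrDr addrACA.
Qed.

Lemma end_extend_cycleZ s p x : dK s = 0 -> homog piK p s ->
  end_extend g (iota s * x) = ksign A n p * (iota s * end_extend g x).
Proof.
move=> hs hp; have hs' := cycle_iota hs; have hsK : ZK s by apply/eqP.
have hsA := iota_homog hp.
rewrite /end_extend (zpart_mull HgA HdA u_grcentral _ hs') (d_mul_cyclel HgA HdA _ hs').
rewrite (twist1M HgA) (twist1K HgA) (glin_iotaZ hsK hp (kerd_zpart x)).
rewrite (glin_iotaZ hsK hp (kerd_twist_d x)) (twist_ksign HgA) (twist1M HgA).
rewrite (twist_homog HgA _ hsA) !mulrDr; congr (_ + _).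
rewrite mulr_ksignCA; congr (_ * _).
rewrite -mulrA mulr_ksignCA (mulrA u) (mulu_twist HgA u_grcentral).
by rewrite (twist_homog HgA _ hsA) -!mulrA ksignMK.
Qed.

Lemma end_extend_mulu w : end_extend g (u * w) = ksign A n (-1) * (u * end_extend g w).
Proof.
have uu : u * u = iota (y * y) by rewrite rmorphM.
have hyy : homog piK (-2) (y * y) by apply: (homogM HgK Hy Hy).
rewrite /end_extend (zpart_mulu HdA u_homog du) (d_mulu HdA u_homog du) -/(pA w) uu.
rewrite (glin_iotaZ kerd_yy hyy (kerd_d w)) -uu.
rewrite (twist_glin_twist (kerd_zpart w)) (twist_glin_twist (kerd_d w)).
have -> : ksign A n (-2) = 1 by rewrite ksignC.
have -> : ksign A n (-1) = ksign A n 1 by rewrite ksignC ksignN1l ksignC.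
rewrite mul1r mulrDr mulrDr addrC mulr_ksignCA; congr (_ + _).
by rewrite !mulr_ksignCA mulrA ksignK mul1r mulrA.
Qed.

Lemma glin_end_extend : glinA n (end_extend g).
Proof.
split => //.
- by move=> x z _ _; apply: end_extendD.
- move=> k x _ hk; apply: (homogD HgA).
    by apply: (glin_homog (kerd_zpart x)); apply: (homog_zpart HgA HdA u_homog).
  have -> : k + n = -1 + (k + 1 + n) by ring.
  apply: (homogM HgA u_homog); apply: (homog_twist HgA).
  apply: (glin_homog (kerd_twist_d x)); apply: (homog_twist HgA).
  exact: (homog_d HdA).
move=> p r x _ hp _.
rewrite [iota r](zpart_split (d := dA) (u := u)) -iota_zpart d_iota mulrDl end_extendD.
rewrite -mulrA end_extend_mulu.
rewrite (end_extend_cycleZ _ (d_zpart HdK Hy dy r) (homog_zpart HgK HdK Hy hp)).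
rewrite (end_extend_cycleZ _ (dd HdK r) (homog_d HdK hp)).
rewrite (mulr_ksignCA n (p + 1) u) (mulrA (ksign A n (-1))) -ksignDr.
have -> : -1 + (p + 1) = p by ring.
by rewrite -mulrDr mulrA mulrDl.
Qed.

End GradedLinearOnCycles.

Lemma gend_end_extend g : gendZ g -> gendA (end_extend g).
Proof.
case=> k [dg [gs [H1 H2]]]; exists k, dg, (fun i => end_extend (gs i)); split.
  by move=> i; apply: glin_end_extend.
by move=> x; rewrite /end_extend !H2 (twist_sum HgA) mulr_sumr -big_split.
Qed.

Lemma end_extend_add f g :
  end_extend (fun x => f x + g x) = (fun x => end_extend f x + end_extend g x).
Proof.
apply: functional_extensionality => x.
by rewrite /end_extend (twistD HgA) mulrDr addrACA.
Qed.

Lemma end_extend_azphi a b : dA a = 0 -> dA b = 0 ->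
  end_extend (azphi piA ZA a b) = azphi piA predT a b.
Proof.
move=> ha hb; apply: functional_extensionality => x.
rewrite /end_extend /azphi /= kerd_zpart kerd_twist_d /=.
rewrite (twist_sum HgA) mulr_sumr -big_split; apply: eq_bigr => n _.
rewrite [x in RHS](zpart_split (d := dA) (u := u)) (twistD HgA) mulrDr mulrDl.
congr (_ + _); rewrite !(twist1M HgA) (twist_twist HgA) (twist_twist HgA).
rewrite (twist_eq HgA (n := 1 + n + 1) (m := n)); last first.
  by move=> k; rewrite !ksignDl commr_ksign -mulrA ksignK mulr1.
rewrite (twist_homog HgA _ (homog_pi HgA n b)) (twist_mulhl HgA n (dA x) u_homog).
rewrite -(mulrA (tw 1 a)) !mulr_ksignCA (mulrA a u) (mulr_u HgA u_grcentral a).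
by rewrite -!mulrA; congr (_ * _); rewrite /ksign /= andbT.
Qed.

Lemma gend_end_restrict f : gendA f -> gendZ (end_restrict f).
Proof.
case=> k [dg [fs [H1 H2]]]; exists k, dg, (fun i => end_restrict (fs i)); split.
  move=> i; case: (H1 i) => _ _ Hadd Hhom Hlin; split.
  - by move=> x /negbTE h; rewrite /end_restrict h.
  - by move=> x hx; rewrite /end_restrict hx kerd_zpart.
  - move=> x z hx hz; rewrite /end_restrict hx hz (kerdD HdA hx hz) Hadd //.
    exact: (zpartD HdA).
  - move=> m x hx hm; rewrite /end_restrict hx.
    by apply: (homog_zpart HgA HdA u_homog); apply: Hhom.
  move=> p r x /eqP hr hp hx.
  have hrx : ZA (iota r * x).
    by apply/eqP; rewrite (cycleM HgA HdA) ?cycle_iota //; apply/eqP.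
  rewrite /end_restrict hrx hx (Hlin p r x) // (zpart_ksign HdA).
  by rewrite (zpart_mull HgA HdA u_grcentral) ?cycle_iota.
move=> x; rewrite /end_restrict H2; case: (ZA x); first exact: (zpart_sum HdA).
by rewrite big1.
Qed.

Lemma end_restrict_add f g :
  end_restrict (fun x => f x + g x) = (fun x => end_restrict f x + end_restrict g x).
Proof.
apply: functional_extensionality => x; rewrite /end_restrict.
by case: (ZA x); rewrite ?(zpartD HdA) ?addr0.
Qed.

Lemma end_restrict_azphi a b : end_restrict (azphi piA predT a b) =
  (fun x => azphi piA ZA (pA a) (pA b) x + azphi piA ZA (qA a) (dA b) x).
Proof.
apply: functional_extensionality => x; rewrite /end_restrict.
case hx: (ZA x); last by rewrite /azphi hx addr0.
have hx' : dA x = 0 by apply/eqP.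
have c1 : supp_in piA (gsupp piA b) (pA b).
  move=> k kb; rewrite (pi_zpart HgA HdA u_homog) (supp_in_gsupp HgA (x := b)) //.
  exact: (zpart0 HdA).
have u1 : uniq [seq n + 1 | n <- gsupp piA b].
  by rewrite map_inj_uniq ?(uniq_gsupp HgA) // => i j /addIr.
have c2 : supp_in piA [seq n + 1 | n <- gsupp piA b] (dA b).
  apply: (supp_in_shift _ (supp_in_gsupp HgA (x := b))) => k.
  by rewrite -{2}(subrK 1 k) -(d_pi HgA HdA) => ->; apply: (d0 HdA).
rewrite (azphi_supp_in HgA ZA (pA a) x (uniq_gsupp HgA b) c1).
rewrite (azphi_supp_in HgA ZA (qA a) x u1 c2) hx.
rewrite big_map /azphi /= (zpart_sum HdA) -big_split; apply: eq_bigr => n _.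
rewrite (zpart_mul3 HgA HdA u_homog du u_grcentral) ?(cycle_twist HgA HdA) //.
by rewrite (pi_zpart HgA HdA u_homog) -(d_pi HgA HdA) (twist_twist HgA) (addrC 1).
Qed.

Lemma end_restrict_extend g : gendZ g -> end_restrict (end_extend g) = g.
Proof.
case=> k [dg [gs [H1 H2]]]; apply: functional_extensionality => x.
rewrite /end_restrict /end_extend.
have g0 : g 0 = 0 by rewrite H2 big1 // => i _; apply: (glin0 (H1 i)).
case hx: (ZA x); last by rewrite H2 big1 // => i _; apply: (glin_outside (H1 i)); rewrite hx.
have hx' : dA x = 0 by apply/eqP.
rewrite (zpart_cycle hx') hx' (twist0 HgA) g0 (twist0 HgA) mulr0 addr0 zpart_cycle //.
rewrite H2 (d_sum HdA) big1 // => i _; apply/eqP.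
exact: (glin_kerd (H1 i) hx).
Qed.

(* The universal property descends: [h f := H (end_extend f)], where [H] comes from the
   universal property of [A] applied to [balanced_lift beta]; uniqueness holds because
   [h' \o end_restrict] satisfies the same property and [end_restrict] inverts [end_extend]. *)
Lemma kerd_tensor_end_iso : tensor_end_iso piK piA ZK ZA iota.
Proof.
split.
- by move=> a b /eqP ha /eqP hb; apply: gend_azphi_kerd.
- by split=> [a a' b _ _ _ | a b b' _ _ _]; [apply: azphiDl | apply: (azphiDr HgA)].
- by move=> a r b _ _ _; apply: (azphi_balanced HgK HgA iota_homog iota_central).
move=> G beta Hb1 Hb2 Hb3.
case: Haz => _ _ _ _ [_ _ _ HU].
have [H [HD Haz_H Huniq]] := HU G (balanced_lift beta)
  (fun a a' b _ _ _ => balanced_liftDl Hb1 a a' b)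
  (fun a b b' _ _ _ => balanced_liftDr Hb2 a b b')
  (fun a r b _ _ _ => balanced_lift_balanced Hb1 Hb2 Hb3 a r b).
exists (fun f => H (end_extend f)); split.
- by move=> f g hf hg; rewrite end_extend_add; apply: HD; apply: gend_end_extend.
- move=> a b ha hb; have [/eqP ha' /eqP hb'] := (ha, hb).
  have beta00 : beta 0 0 = 0.
    have h0 : ZA 0 by apply/eqP; apply: (d0 HdA).
    by apply: (addrI (beta 0 0)); rewrite -Hb2 // !addr0.
  rewrite end_extend_azphi // Haz_H // /balanced_lift !zpart_cycle // /zcorr ha' hb'.
  by rewrite (twist0 HgA) mulr0 beta00 addr0.
move=> h' Hh'D Hh'az f hf.
have h'_restrict : forall phi, gendA phi -> h' (end_restrict phi) = H phi.
  apply: (Huniq (fun phi => h' (end_restrict phi))).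
    move=> phi psi hphi hpsi; rewrite end_restrict_add.
    by apply: Hh'D; apply: gend_end_restrict.
  move=> a b _ _; rewrite end_restrict_azphi Hh'D.
  - by rewrite !Hh'az ?kerd_zpart ?kerd_zcorr ?kerd_d.
  - by apply: gend_azphi_kerd; apply: (d_zpart HdA u_homog du).
  - by apply: gend_azphi_kerd; [apply: (d_zcorr HgA HdA u_homog du) | apply: (dd HdA)].
by rewrite -{1}(end_restrict_extend hf) h'_restrict //; apply: gend_end_extend.
Qed.

Lemma kerd_graded_azumaya : graded_azumaya piK piA ZK ZA iota.
Proof.
split.
- by split; [apply: kerd_gr_fg_projective | apply: kerd_gr_faithful].
- exact: kerd_grcentral_iota.
- by move=> r _ h; apply: iota_inj; rewrite h rmorph0.
- exact: kerd_grcentre.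
- exact: kerd_tensor_end_iso.
Qed.

End FirstKind.

Theorem proposition4p6 (K A : pzRingType) (piK : int -> K -> K) (piA : int -> A -> A)
  (dK : K -> K) (dA : A -> A) (iota : {rmorphism K -> A}) :
  is_grading piK -> is_grading piA ->
  dg_ring piK dK -> dg_ring piA dA ->
  graded_commutative piK ->
  acyclic dK ->
  dg_algebra_over piK piA dK dA iota ->
  graded_azumaya piK piA predT predT iota ->
  graded_azumaya piK piA (kerd dK) (kerd dA) iota.
Proof.
move=> HgK HgA HdK HdA HgcK Hac Halg Haz.
have [y0 dy0] := Hac 1 (d1 HgK HdK).
have Hy : homog piK (-1) (piK (-1) y0) by apply: homog_pi.
have dy : dK (piK (-1) y0) = 1.
  by rewrite (d_pi HgK HdK) dy0 addNr; apply: (homog1 HgK).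
exact: (kerd_graded_azumaya HgK HgA HdK HdA HgcK Halg Haz Hy dy).
Qed.
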